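(* Let $r$ and $n$ be positive integers, let $p\in\mathbb C$ with $\operatorname{Re}(r(p+1))>1$, and let $t\in\mathbb C$ with $|t|\le1$. Then $$M_r(t;n):=\sum_{k\ge1}\frac{M_r(t;n,k)}{k^{rp}}=\frac{\mathrm{Li}_{rp+r}(t)}{\zeta(rp+r)}\,\sigma_{-p}(n,r).$$
   Context: For positive integers $a,b,r$, $(a,b)_r$ denotes the largest $r$-th power dividing both $a$ and $b$. The $r$-Ramanujan sum is $c_r(n,k):=\sum_{1\le m\le k^r,\ (m,k^r)_r=1}e^{2\pi i mn/k^r}$, and $M_r(t;n,k):=\frac{1}{k^r}\sum_{d\mid k}c_r(n,k/d)\,t^d$. $\mathrm{Li}_s(t):=\sum_{k\ge1}t^k/k^s$ is the polylogarithm, $\zeta$ the Riemann zeta function, and $\sigma_p(n,r):=\sum_{d\ge1,\ d^r\mid n}d^{rp}$. *)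

From Stdlib Require Import Reals List Arith.
From Coquelicot Require Import Coquelicot.
Open Scope C_scope.

Definition cis (th : R) : C := (cos th, sin th).

(* x^s := exp(s ln x) for real x > 0 and complex s (principal power) *)
Definition cpowR (x : R) (s : C) : C :=
  RtoC (exp (Re s * ln x)) * cis (Im s * ln x).

Definition csum (l : list nat) (f : nat -> C) : C :=
  fold_right (fun m acc => f m + acc) 0 l.

(* (a,b)_r : the largest r-th power d^r dividing both a and b
   (for a >= 1 every such d satisfies 1 <= d <= a) *)
Definition gcdr (r a b : nat) : nat :=
  list_max (map (fun d => if (Nat.eqb (a mod d ^ r)%nat 0 && Nat.eqb (b mod d ^ r)%nat 0)%bool
                          then (d ^ r)%nat else 0%nat) (seq 1 a)).

Definition ramr (r n k : nat) : C :=
  csum (filter (fun m => Nat.eqb (gcdr r m (k ^ r)%nat) 1) (seq 1 (k ^ r)%nat))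
       (fun m => cis (2 * PI * INR m * INR n / INR (k ^ r)%nat)).

Definition Mr (r : nat) (t : C) (n k : nat) : C :=
  / RtoC (INR (k ^ r)%nat) *
  csum (filter (fun d => Nat.eqb (k mod d)%nat 0) (seq 1 k))
       (fun d => ramr r n (k / d)%nat * pow_n t d).

(* sum of a complex series (the value is meaningful when the series converges) *)
Definition CSeries (a : nat -> C) : C :=
  (Series (fun k => Re (a k)), Series (fun k => Im (a k))).

Definition Li (s t : C) : C :=
  CSeries (fun k : nat => pow_n t (S k) / cpowR (INR (S k)) s).

Definition zeta (s : C) : C :=
  CSeries (fun k : nat => / cpowR (INR (S k)) s).

(* sigma_q(n,r) = sum_{d >= 1, d^r | n} d^{r q}  (for n >= 1, d <= n) *)
Definition sigmar (q : C) (n r : nat) : C :=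
  csum (filter (fun d => Nat.eqb (n mod d ^ r)%nat 0) (seq 1 n))
       (fun d => cpowR (INR d) (RtoC (INR r) * q)).

From Stdlib Require Import Reals Arith Lia List Lra Bool.
From Coquelicot Require Import Coquelicot.
Open Scope C_scope.

(* Put s = r p + r, so that Re s > 1, and write L(f, s) = sum_{k >= 1} f(k) k^{-s}.
   Detecting (m, k^r)_r = 1 by the Moebius sum over {d | k, d^r | m} and summing roots of unity
   gives Cohen's formula c_r(n, .) = mu * h, where h(q) = q^r if q^r | n and h(q) = 0 otherwise.
   Since k^{-r} k^{-rp} = k^{-s}, the numbers M_r(t; n, k) k^{-rp} are the coefficients of
   L(t^. * c_r(n, .), s). The sequences t^k, mu and h are bounded, so their Dirichlet series
   converge absolutely and multiply:
     sum_k M_r(t; n, k) / k^{rp} = Li_s(t) L(mu, s) L(h, s) = Li_s(t) / zeta(s) sigma_{-p}(n, r),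
   because L(mu, s) zeta(s) = L(mu * 1, s) = 1 and L(h, s) is the finite sum sigma_{-p}(n, r).
   Absolutely convergent Dirichlet series multiply because, for non-negative terms, the partial
   sums of the convolution (sums over the hyperbola d e <= N) are squeezed between products of
   partial sums (sums over the squares [1, sqrt N]^2 and [1, N]^2); for complex terms the
   difference with the product of partial sums is dominated by the same gap for the moduli. *)

(** * Finite sums *)

Lemma csum_app l1 l2 (f : nat -> C) : csum (l1 ++ l2) f = csum l1 f + csum l2 f.
Proof. induction l1 as [|a l1 IH]; simpl. - ring. - unfold csum in *; simpl. rewrite IH. ring. Qed.

Lemma csum_ext l (f g : nat -> C) : (forall x, In x l -> f x = g x) -> csum l f = csum l g.
Proof.
  induction l as [|a l IH]; intros H; [reflexivity|].
  unfold csum in *; simpl.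
  rewrite H by now left. rewrite IH by (intros; apply H; now right). reflexivity.
Qed.

Lemma csum_eq0 l (f : nat -> C) : (forall x, In x l -> f x = 0) -> csum l f = 0.
Proof.
  induction l as [|a l IH]; intros H; [reflexivity|].
  unfold csum in *; simpl.
  rewrite H by now left. rewrite IH by (intros; apply H; now right). ring.
Qed.

Lemma csum_filter (P : nat -> bool) l (f : nat -> C) :
  csum (filter P l) f = csum l (fun x => if P x then f x else 0).
Proof.
  induction l as [|a l IH]; [reflexivity|].
  simpl. destruct (P a); unfold csum in *; simpl; rewrite IH; ring.
Qed.

Lemma csum_plus l (f g : nat -> C) : csum l (fun x => f x + g x) = csum l f + csum l g.
Proof. induction l as [|a l IH]; simpl. - ring. - unfold csum in *; simpl. rewrite IH. ring. Qed.

Lemma csum_minus l (f g : nat -> C) : csum l (fun x => f x - g x) = csum l f - csum l g.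
Proof. induction l as [|a l IH]; simpl. - ring. - unfold csum in *; simpl. rewrite IH. ring. Qed.

Lemma csum_mult_l l (c : C) (f : nat -> C) : csum l (fun x => c * f x) = c * csum l f.
Proof. induction l as [|a l IH]; simpl. - ring. - unfold csum in *; simpl. rewrite IH. ring. Qed.

Lemma csum_mult_r l (c : C) (f : nat -> C) : csum l (fun x => f x * c) = csum l f * c.
Proof. induction l as [|a l IH]; simpl. - ring. - unfold csum in *; simpl. rewrite IH. ring. Qed.

Lemma csum_swap (l1 l2 : list nat) (F : nat -> nat -> C) :
  csum l1 (fun x => csum l2 (F x)) = csum l2 (fun y => csum l1 (fun x => F x y)).
Proof.
  induction l1 as [|a l1 IH].
  - symmetry. now apply csum_eq0.
  - change (csum l2 (F a) + csum l1 (fun x => csum l2 (F x)) =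
            csum l2 (fun y => F a y + csum l1 (fun x => F x y))).
    now rewrite IH, csum_plus.
Qed.

Lemma csum_mult l (f g : nat -> C) :
  csum l f * csum l g = csum l (fun d => csum l (fun e => f d * g e)).
Proof.
  rewrite <- csum_mult_r. apply csum_ext. intros d _. now rewrite csum_mult_l.
Qed.

Definition rsum (l : list nat) (f : nat -> R) : R :=
  fold_right (fun m acc => (f m + acc)%R) 0%R l.

Lemma rsum_app l1 l2 f : rsum (l1 ++ l2) f = (rsum l1 f + rsum l2 f)%R.
Proof. induction l1 as [|a l1 IH]; simpl. - ring. - rewrite IH. ring. Qed.

Lemma rsum_ext l f g : (forall x, In x l -> f x = g x) -> rsum l f = rsum l g.
Proof.
  induction l as [|a l IH]; simpl; intros H; [reflexivity|].
  rewrite H by now left. rewrite IH by (intros; apply H; now right). reflexivity.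
Qed.

Lemma rsum_le l f g : (forall x, In x l -> f x <= g x)%R -> (rsum l f <= rsum l g)%R.
Proof.
  induction l as [|a l IH]; simpl; intros H; [lra|].
  apply Rplus_le_compat; auto.
Qed.

Lemma rsum_ge0 l f : (forall x, In x l -> 0 <= f x)%R -> (0 <= rsum l f)%R.
Proof.
  induction l as [|a l IH]; simpl; intros H; [lra|].
  apply Rplus_le_le_0_compat; auto.
Qed.

Lemma rsum_minus l f g : rsum l (fun x => f x - g x)%R = (rsum l f - rsum l g)%R.
Proof. induction l as [|a l IH]; simpl. - ring. - rewrite IH. ring. Qed.

Lemma rsum_mult_l l c f : (c * rsum l f)%R = rsum l (fun x => c * f x)%R.
Proof. induction l as [|a l IH]; simpl. - ring. - rewrite <- IH. ring. Qed.

Lemma rsum_mult_r l c f : (rsum l f * c)%R = rsum l (fun x => f x * c)%R.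
Proof. induction l as [|a l IH]; simpl. - ring. - rewrite <- IH. ring. Qed.

Lemma rsum_mult l (f g : nat -> R) :
  (rsum l f * rsum l g)%R = rsum l (fun d => rsum l (fun e => f d * g e))%R.
Proof.
  rewrite rsum_mult_r. apply rsum_ext. intros d _. now rewrite rsum_mult_l.
Qed.

Lemma rsum_prefix_le M N F : (M <= N)%nat -> (forall x, 0 <= F x)%R ->
  (rsum (seq 1 M) F <= rsum (seq 1 N) F)%R.
Proof.
  intros H HF. replace N with (M + (N - M))%nat by lia. rewrite seq_app, rsum_app.
  assert (0 <= rsum (seq (1 + M) (N - M)) F)%R by (apply rsum_ge0; auto). lra.
Qed.

Lemma RtoC_rsum l f : RtoC (rsum l f) = csum l (fun x => RtoC (f x)).
Proof.
  induction l as [|a l IH]; [reflexivity|]. unfold csum in *; simpl. now rewrite RtoC_plus, IH.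
Qed.

Lemma Cmod_csum_le l (f : nat -> C) : (Cmod (csum l f) <= rsum l (fun x => Cmod (f x)))%R.
Proof.
  induction l as [|a l IH]; unfold csum in *; simpl.
  - rewrite Cmod_0. lra.
  - eapply Rle_trans; [apply Cmod_triangle|]. lra.
Qed.

Lemma sum_n_csum (f : nat -> C) N : sum_n (fun k => f (S k)) N = csum (seq 1 (S N)) f.
Proof.
  induction N as [|N IH].
  - rewrite sum_O. unfold csum; simpl. ring.
  - rewrite sum_Sn, IH, (seq_S (S N) 1), csum_app. unfold csum at 3; simpl.
    change (plus ?x ?y) with (Cplus x y). ring.
Qed.

Lemma sum_n_rsum (f : nat -> R) N : sum_n (fun k => f (S k)) N = rsum (seq 1 (S N)) f.
Proof.
  induction N as [|N IH].
  - rewrite sum_O. simpl. ring.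
  - rewrite sum_Sn, IH, (seq_S (S N) 1), rsum_app. simpl. unfold plus; simpl. ring.
Qed.

(** * Dirichlet convolution *)

Definition dvdb (d m : nat) : bool := Nat.eqb (m mod d) 0.

Lemma dvdbP d m : reflect (Nat.divide d m) (dvdb d m).
Proof.
  unfold dvdb. apply iff_reflect. now rewrite Nat.eqb_eq, Nat.Lcm0.mod_divide.
Qed.

Lemma dvdb_iff d m : dvdb d m = true <-> Nat.divide d m.
Proof. symmetry. apply reflect_iff, dvdbP. Qed.

Definition divs (k : nat) : list nat := filter (fun d => dvdb d k) (seq 1 k).

Definition dconv (f g : nat -> C) (k : nat) : C :=
  csum (divs k) (fun d => f d * g (k / d)%nat).

Lemma divs_spec k d : In d (divs k) <-> (1 <= d <= k /\ Nat.divide d k)%nat.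
Proof.
  unfold divs. rewrite filter_In, in_seq. destruct (dvdbP d k); intuition (try lia; discriminate).
Qed.

Lemma succ_div_cases a N : (1 <= a)%nat ->
  (S N / a = if dvdb a (S N) then S (N / a) else N / a)%nat.
Proof.
  intros Ha.
  pose proof (Nat.div_mod N a ltac:(lia)) as E. pose proof (Nat.mod_upper_bound N a ltac:(lia)).
  destruct (Nat.eq_dec (S (N mod a)) a) as [Hr|Hr].
  - assert (S N = S (N / a) * a)%nat as ->  by nia.
    unfold dvdb. now rewrite Nat.Div0.mod_mul, Nat.div_mul by lia.
  - unfold dvdb.
    rewrite <- (Nat.mod_unique (S N) a (N / a) (S (N mod a))) by lia.
    rewrite <- (Nat.div_unique (S N) a (N / a) (S (N mod a))) by lia. reflexivity.
Qed.

Lemma csum_seq_multiples a N (G : nat -> C) : (1 <= a)%nat ->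
  csum (seq 1 N) (fun m => if dvdb a m then G m else 0) =
  csum (seq 1 (N / a)) (fun e => G (a * e)%nat).
Proof.
  intros Ha. induction N as [|N IH]; [now rewrite Nat.Div0.div_0_l|].
  rewrite seq_S, csum_app, IH, (succ_div_cases a N Ha).
  unfold csum at 2; simpl. destruct (dvdbP a (S N)) as [[q Hq]|].
  - assert (EN : (S N = a * S (N / a))%nat).
    { pose proof (succ_div_cases a N Ha) as D.
      destruct (dvdbP a (S N)) as [_|Hn]; [|exfalso; apply Hn; now exists q].
      rewrite Hq, Nat.div_mul in D by lia. rewrite Hq, <- D. lia. }
    rewrite seq_S, csum_app. unfold csum at 3; simpl. rewrite <- EN. ring.
  - ring.
Qed.

Lemma csum_seq_truncate N M (F : nat -> C) : (M <= N)%nat ->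
  csum (seq 1 N) (fun e => if Nat.leb e M then F e else 0) = csum (seq 1 M) F.
Proof.
  intros H. replace N with (M + (N - M))%nat by lia. rewrite seq_app, csum_app.
  rewrite (csum_eq0 (seq (1 + M) _)), Cplus_0_r.
  - apply csum_ext. intros x Hx. apply in_seq in Hx.
    now replace (Nat.leb x M) with true by (symmetry; apply Nat.leb_le; lia).
  - intros x Hx. apply in_seq in Hx.
    now replace (Nat.leb x M) with false by (symmetry; apply Nat.leb_gt; lia).
Qed.

Lemma csum_divs_seq k N (F : nat -> C) : (1 <= k <= N)%nat ->
  csum (divs k) F = csum (seq 1 N) (fun d => if dvdb d k then F d else 0).
Proof.
  intros H. unfold divs. rewrite csum_filter.
  replace N with (k + (N - k))%nat by lia. rewrite seq_app, csum_app.
  rewrite (csum_eq0 (seq (1 + k) _)), Cplus_0_r; [reflexivity|].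
  intros x Hx. apply in_seq in Hx.
  destruct (dvdbP x k) as [Hd|]; [apply Nat.divide_pos_le in Hd; lia | reflexivity].
Qed.

Lemma csum_dconv_hyperbola (f g : nat -> C) N :
  csum (seq 1 N) (dconv f g) =
  csum (seq 1 N) (fun d => csum (seq 1 N) (fun e => if Nat.leb e (N / d) then f d * g e else 0)).
Proof.
  unfold dconv.
  rewrite (csum_ext (seq 1 N) _ (fun k => csum (seq 1 N)
    (fun d => if dvdb d k then f d * g (k / d)%nat else 0))).
  2:{ intros k Hk. apply in_seq in Hk. apply csum_divs_seq. lia. }
  rewrite csum_swap. apply csum_ext. intros d Hd. apply in_seq in Hd.
  rewrite (csum_seq_multiples d N (fun m => f d * g (m / d)%nat)) by lia.
  rewrite csum_seq_truncate.
  - apply csum_ext. intros e _. now rewrite Nat.mul_comm, Nat.div_mul by lia.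
  - apply Nat.Div0.div_le_upper_bound. nia.
Qed.

(** * Products of absolutely convergent series *)

(* [C_AbsRing] carries the uniform structure of its absolute value and [C_UniformSpace] the
   product one; [filterlim_mult] is stated for the former, [is_series] uses the latter. *)
Lemma filterlim_C_AbsRing {T} (F : (T -> Prop) -> Prop) (f : T -> C) l : Filter F ->
  filterlim f F (locally (T := C_UniformSpace) l) <->
  filterlim f F (locally (T := AbsRing_UniformSpace C_AbsRing) l).
Proof.
  intros HF.
  rewrite (filterlim_locally_ball_norm (U := C_NormedModule)).
  now rewrite (filterlim_locally_ball_norm (U := AbsRing_NormedModule C_AbsRing)).
Qed.

Lemma filterlim_seq_Cmult (u v : nat -> C) U V :
  filterlim u eventually (locally U) -> filterlim v eventually (locally V) ->
  filterlim (fun n => u n * v n) eventually (locally (U * V)).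
Proof.
  intros Hu Hv. apply filterlim_C_AbsRing; [apply eventually_filter|].
  apply filterlim_C_AbsRing in Hu, Hv; try apply eventually_filter.
  exact (filterlim_comp_2 u v Cmult Hu Hv (filterlim_mult (K := C_AbsRing) U V)).
Qed.

Lemma filterlim_seq_Cminus (u v : nat -> C) U V :
  filterlim u eventually (locally U) -> filterlim v eventually (locally V) ->
  filterlim (fun n => u n - v n) eventually (locally (U - V)).
Proof.
  intros Hu Hv.
  pose proof (filterlim_comp _ _ _ v opp _ _ _ Hv (filterlim_opp (V := C_NormedModule) V)) as Hv'.
  exact (filterlim_comp_2 u _ Cplus Hu Hv' (filterlim_plus (V := C_NormedModule) U (opp V))).
Qed.

Lemma filterlim_seq_Cmod_le0 (u : nat -> C) (w : nat -> R) :
  (forall n, Cmod (u n) <= w n)%R -> is_lim_seq w 0%R ->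
  filterlim u eventually (locally (RtoC 0)).
Proof.
  intros H Hw. apply (filterlim_norm_zero (V := C_NormedModule)).
  change (is_lim_seq (fun n => Cmod (u n)) 0%R).
  apply (is_lim_seq_le_le (fun _ => 0%R) _ w); auto using is_lim_seq_const.
  intros n. split; [apply Cmod_ge_0 | apply H].
Qed.

Definition hyperbola_rsum (a b : nat -> R) N : R :=
  rsum (seq 1 N) (fun d => rsum (seq 1 N)
    (fun e => if Nat.leb e (N / d) then a d * b e else 0))%R.

Lemma rsum_rdconv_hyperbola (a b : nat -> R) N :
  rsum (seq 1 N) (fun k => rsum (divs k) (fun d => a d * b (k / d)%nat)%R) = hyperbola_rsum a b N.
Proof.
  assert (H : RtoC (rsum (seq 1 N) (fun k => rsum (divs k) (fun d => a d * b (k / d)%nat)%R)) =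
              RtoC (hyperbola_rsum a b N)).
  { unfold hyperbola_rsum. rewrite !RtoC_rsum.
    transitivity (csum (seq 1 N) (dconv (fun x => RtoC (a x)) (fun x => RtoC (b x)))).
    - apply csum_ext. intros k _. rewrite RtoC_rsum. apply csum_ext. intros. apply RtoC_mult.
    - rewrite csum_dconv_hyperbola. apply csum_ext. intros d _. rewrite RtoC_rsum.
      apply csum_ext. intros e _. destruct (Nat.leb e (N / d)); auto. now rewrite RtoC_mult. }
  now injection H.
Qed.

Section Hyperbola.
Variables a b : nat -> R.
Hypothesis a_ge0 : forall x, (0 <= a x)%R.
Hypothesis b_ge0 : forall x, (0 <= b x)%R.

Lemma hyperbola_rsum_le N : (hyperbola_rsum a b N <= rsum (seq 1 N) a * rsum (seq 1 N) b)%R.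
Proof.
  unfold hyperbola_rsum. rewrite rsum_mult.
  apply rsum_le. intros d _. apply rsum_le. intros e _.
  destruct (Nat.leb e (N / d)); [lra | apply Rmult_le_pos; auto].
Qed.

(* The square [1, M]^2 lies under the hyperbola d e <= N as soon as M^2 <= N. *)
Lemma hyperbola_rsum_ge M N : (M * M <= N)%nat ->
  (rsum (seq 1 M) a * rsum (seq 1 M) b <= hyperbola_rsum a b N)%R.
Proof.
  intros HMN. assert (HM : (M <= N)%nat) by nia.
  assert (Hterm : forall d e, (0 <= if Nat.leb e (N / d) then a d * b e else 0)%R).
  { intros d e. destruct (Nat.leb e (N / d)); [apply Rmult_le_pos; auto | lra]. }
  unfold hyperbola_rsum. rewrite rsum_mult.
  eapply Rle_trans; [|apply rsum_prefix_le with (M := M); auto].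
  2:{ intros d. apply rsum_ge0. auto. }
  apply rsum_le. intros d Hd. apply in_seq in Hd.
  eapply Rle_trans; [|apply rsum_prefix_le with (M := M); auto].
  apply rsum_le. intros e He. apply in_seq in He.
  replace (Nat.leb e (N / d)) with true; [lra|].
  symmetry. apply Nat.leb_le, Nat.div_le_lower_bound; nia.
Qed.

Lemma is_lim_seq_hyperbola_rsum A B :
  is_series (fun k => a (S k)) A -> is_series (fun k => b (S k)) B ->
  is_lim_seq (fun N => hyperbola_rsum a b (S N)) (A * B)%R.
Proof.
  intros HA HB.
  set (Q N := (sum_n (fun k => a (S k)) N * sum_n (fun k => b (S k)) N)%R).
  assert (HQ : is_lim_seq Q (A * B)%R) by (apply is_lim_seq_mult'; assumption).
  set (phi N := pred (Nat.sqrt (S N))).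
  assert (Hphi : filterlim phi eventually eventually).
  { intros P [N0 HN0]. exists (S N0 * S N0)%nat. intros n Hn. apply HN0.
    assert (S N0 <= Nat.sqrt (S n))%nat by (apply Nat.sqrt_le_square; lia).
    unfold phi. lia. }
  apply (is_lim_seq_le_le (fun N => Q (phi N)) _ Q).
  - intros N. unfold Q. rewrite !sum_n_rsum. split.
    + unfold phi. pose proof (Nat.sqrt_spec' (S N)) as Hs.
      assert (1 <= Nat.sqrt (S N))%nat by (apply Nat.sqrt_le_square; lia).
      apply hyperbola_rsum_ge. rewrite Nat.succ_pred by lia. lia.
    + apply hyperbola_rsum_le.
  - now apply is_lim_seq_subseq.
  - exact HQ.
Qed.

End Hyperbola.

Lemma Cmod_prod_minus_dconv_le (f g : nat -> C) N :
  (Cmod (csum (seq 1 N) f * csum (seq 1 N) g - csum (seq 1 N) (dconv f g))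
   <= rsum (seq 1 N) (fun x => Cmod (f x)) * rsum (seq 1 N) (fun x => Cmod (g x))
      - hyperbola_rsum (fun x => Cmod (f x)) (fun x => Cmod (g x)) N)%R.
Proof.
  rewrite csum_dconv_hyperbola, csum_mult, <- csum_minus.
  unfold hyperbola_rsum. rewrite rsum_mult, <- rsum_minus.
  eapply Rle_trans; [apply Cmod_csum_le|]. apply rsum_le. intros d _.
  rewrite <- csum_minus, <- rsum_minus.
  eapply Rle_trans; [apply Cmod_csum_le|]. apply rsum_le. intros e _.
  destruct (Nat.leb e (N / d)).
  - replace (f d * g e - f d * g e) with (RtoC 0) by ring. rewrite Cmod_0. lra.
  - replace (f d * g e - 0) with (f d * g e) by ring. rewrite Cmod_mult. lra.
Qed.

Section DirichletProduct.
Variables f g : nat -> C.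
Hypothesis f_abs : ex_series (fun k => Cmod (f (S k))).
Hypothesis g_abs : ex_series (fun k => Cmod (g (S k))).

Let a x := Cmod (f x).
Let b x := Cmod (g x).

Lemma is_lim_seq_hyperbola_Cmod :
  is_lim_seq (fun N => hyperbola_rsum a b (S N))
    (Series (fun k => a (S k)) * Series (fun k => b (S k)))%R.
Proof.
  apply is_lim_seq_hyperbola_rsum; try (intros; apply Cmod_ge_0); now apply Series_correct.
Qed.

Lemma ex_series_Cmod_dconv : ex_series (fun k => Cmod (dconv f g (S k))).
Proof.
  apply (ex_series_le (K := R_AbsRing) (V := R_CompleteNormedModule) _
           (fun k => rsum (divs (S k)) (fun d => a d * b (S k / d)%nat)%R)).
  - intros k. change (Rabs (Cmod (dconv f g (S k)))
                      <= rsum (divs (S k)) (fun d => a d * b (S k / d)%nat))%R.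
    rewrite Rabs_pos_eq by apply Cmod_ge_0.
    eapply Rle_trans; [apply Cmod_csum_le|].
    apply rsum_le. intros. rewrite Cmod_mult. apply Rle_refl.
  - exists (Series (fun k => a (S k)) * Series (fun k => b (S k)))%R.
    set (u k := rsum (divs (S k)) (fun d => a d * b (S k / d)%nat)%R).
    change (is_lim_seq (sum_n u) (Series (fun k => a (S k)) * Series (fun k => b (S k)))%R).
    apply (is_lim_seq_ext (fun N => hyperbola_rsum a b (S N))); [|apply is_lim_seq_hyperbola_Cmod].
    intros N. unfold u.
    now rewrite (sum_n_rsum (fun k => rsum (divs k) (fun d => a d * b (k / d)%nat)%R)),
      rsum_rdconv_hyperbola.
Qed.

Theorem is_series_dconv F G :
  is_series (fun k => f (S k)) F -> is_series (fun k => g (S k)) G ->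
  is_series (fun k => dconv f g (S k)) (F * G).
Proof.
  intros Hf Hg.
  set (prod N := sum_n (fun k => f (S k)) N * sum_n (fun k => g (S k)) N).
  assert (Hprod : filterlim prod eventually (locally (F * G))) by now apply filterlim_seq_Cmult.
  assert (Hgap : filterlim (fun N => prod N - sum_n (fun k => dconv f g (S k)) N) eventually
                   (locally (RtoC 0))).
  { apply filterlim_seq_Cmod_le0 with
      (w := fun N => (rsum (seq 1 (S N)) a * rsum (seq 1 (S N)) b - hyperbola_rsum a b (S N))%R).
    - intros N. unfold prod. rewrite !sum_n_csum. apply Cmod_prod_minus_dconv_le.
    - set (A := Series (fun k => a (S k))). set (B := Series (fun k => b (S k))).
      replace 0%R with (A * B - A * B)%R by ring.
      apply is_lim_seq_minus'; [|apply is_lim_seq_hyperbola_Cmod].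
      apply is_lim_seq_mult'; eapply is_lim_seq_ext; try (intros; apply sum_n_rsum);
        now apply Series_correct. }
  replace (F * G) with (F * G - 0) by ring.
  unfold is_series. eapply filterlim_ext; [|exact (filterlim_seq_Cminus _ _ _ _ Hprod Hgap)].
  assert (Hcancel : forall x y : C, x - (x - y) = y) by (intros; ring).
  intros N. apply Hcancel.
Qed.

End DirichletProduct.

(** * Complex powers *)

Lemma cis_add a b : cis (a + b) = cis a * cis b.
Proof. unfold cis. apply injective_projections; simpl; rewrite ?cos_plus, ?sin_plus; ring. Qed.

Lemma cis_0 : cis 0 = 1.
Proof. unfold cis. now rewrite cos_0, sin_0. Qed.

Lemma cis_period x k : cis (x + 2 * INR k * PI) = cis x.
Proof. unfold cis. now rewrite cos_period, sin_period. Qed.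

Lemma Cmod_cis a : Cmod (cis a) = 1%R.
Proof.
  unfold cis, Cmod. simpl. rewrite !Rmult_1_r.
  replace (cos a * cos a + sin a * sin a)%R with 1%R; [apply sqrt_1|].
  pose proof (sin2_cos2 a). unfold Rsqr in *. lra.
Qed.

Lemma Cmod_cpowR x s : Cmod (cpowR x s) = Rpower x (Re s).
Proof.
  unfold cpowR, Rpower. rewrite Cmod_mult, Cmod_cis, Rmult_1_r, Cmod_R.
  apply Rabs_pos_eq, Rlt_le, exp_pos.
Qed.

Lemma cpowR_neq0 x s : cpowR x s <> 0.
Proof.
  intros H. apply (f_equal Cmod) in H. rewrite Cmod_cpowR, Cmod_0 in H.
  unfold Rpower in H. pose proof (exp_pos (Re s * ln x)). lra.
Qed.

Lemma cpowR_add x s u : cpowR x (s + u) = cpowR x s * cpowR x u.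
Proof.
  unfold cpowR. change (Re (s + u)) with (Re s + Re u)%R. change (Im (s + u)) with (Im s + Im u)%R.
  rewrite !Rmult_plus_distr_r, exp_plus, cis_add, RtoC_mult. ring.
Qed.

Lemma cpowR_mul_base x y s : (0 < x)%R -> (0 < y)%R -> cpowR (x * y) s = cpowR x s * cpowR y s.
Proof.
  intros. unfold cpowR. rewrite ln_mult by auto.
  rewrite !Rmult_plus_distr_l, exp_plus, cis_add, RtoC_mult. ring.
Qed.

Lemma cpowR_1_base s : cpowR 1 s = 1.
Proof. unfold cpowR. rewrite ln_1, !Rmult_0_r, exp_0, cis_0. ring. Qed.

Lemma cpowR_INR x r : (0 < x)%R -> cpowR x (RtoC (INR r)) = RtoC (x ^ r).
Proof.
  intros. unfold cpowR. simpl. rewrite Rmult_0_l, cis_0, Cmult_1_r.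
  now rewrite <- Rpower_pow.
Qed.

Lemma cpowR_opp x s : cpowR x (- s) = / cpowR x s.
Proof.
  assert (E : cpowR x (- s) * cpowR x s = 1).
  { rewrite <- cpowR_add. replace (- s + s) with (RtoC 0) by ring.
    unfold cpowR. simpl. rewrite !Rmult_0_l, exp_0, cis_0. ring. }
  rewrite <- (Cmult_1_l (/ _)), <- E. field. apply cpowR_neq0.
Qed.

(* From e^y >= 1 + y with y = al ln(x/(x-1)) >= al/x. *)
Lemma Rpower_telescoping_le x al : (2 <= x)%R -> (0 < al)%R ->
  (al * Rpower x (- (1 + al)) <= Rpower (x - 1) (- al) - Rpower x (- al))%R.
Proof.
  intros Hx Hal.
  assert (Hln : (/ x <= ln x - ln (x - 1))%R).
  { rewrite <- ln_div by lra. pose proof (exp_ineq1_le (ln ((x - 1) / x))) as E.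
    rewrite exp_ln in E by (apply Rdiv_lt_0_compat; lra).
    rewrite ln_div, <- Ropp_minus_distr in * by lra.
    replace ((x - 1) / x)%R with (1 - / x)%R in E by (field; lra). lra. }
  assert (Hexp := exp_ineq1_le (al * (ln x - ln (x - 1)))).
  assert (Hx0 := exp_pos (- al * ln x)).
  unfold Rpower.
  replace (- al * ln (x - 1))%R with (- al * ln x + al * (ln x - ln (x - 1)))%R by ring.
  replace (- (1 + al) * ln x)%R with (- al * ln x + - ln x)%R by ring.
  rewrite !exp_plus, exp_Ropp, exp_ln by lra.
  assert (al * / x <= al * (ln x - ln (x - 1)))%R by (apply Rmult_le_compat_l; lra).
  nra.
Qed.

Lemma rsum_Rpower_le sg N : (1 < sg)%R -> (1 <= N)%nat ->
  ((sg - 1) * rsum (seq 1 N) (fun k => Rpower (INR k) (- sg))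
   <= sg - Rpower (INR N) (- (sg - 1)))%R.
Proof.
  intros Hs HN. induction N as [|N IH]; [lia|]. destruct N as [|N].
  - simpl. unfold Rpower. rewrite ln_1, !Rmult_0_r, exp_0. lra.
  - rewrite seq_S, rsum_app. replace (1 + S N)%nat with (S (S N)) by lia.
    specialize (IH ltac:(lia)).
    set (x := INR (S (S N))).
    assert (Hx : x = (INR (S N) + 1)%R) by apply S_INR.
    assert (Hx2 : (2 <= x)%R) by (rewrite Hx, S_INR; pose proof (pos_INR N); lra).
    pose proof (Rpower_telescoping_le x (sg - 1) Hx2 ltac:(lra)) as T.
    replace (x - 1)%R with (INR (S N)) in T by lra.
    replace (- (1 + (sg - 1)))%R with (- sg)%R in T by ring.
    change (rsum (S (S N) :: nil) _) with (Rpower x (- sg) + 0)%R. lra.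
Qed.

Lemma ex_series_Rpower sg : (1 < sg)%R -> ex_series (fun k => Rpower (INR (S k)) (- sg)).
Proof.
  intros Hs.
  set (u N := sum_n (fun k => Rpower (INR (S k)) (- sg)) N).
  assert (Hgrow : Un_growing u).
  { intros n. unfold u. rewrite sum_Sn. change (plus ?a ?b) with (a + b)%R.
    rewrite <- (Rplus_0_r (sum_n _ n)) at 1. apply Rplus_le_compat_l, Rlt_le, exp_pos. }
  assert (Hub : has_ub u).
  { exists (sg / (sg - 1))%R. intros y [N ->]. unfold u.
    rewrite (sum_n_rsum (fun k => Rpower (INR k) (- sg))).
    apply (Rmult_le_reg_l (sg - 1)); [lra|].
    replace ((sg - 1) * (sg / (sg - 1)))%R with sg by (field; lra).
    pose proof (exp_pos (- (sg - 1) * ln (INR (S N)))).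
    eapply Rle_trans; [apply rsum_Rpower_le; auto; lia|]. unfold Rpower. lra. }
  destruct (growing_cv u Hgrow Hub) as [l Hl]. exists l. now apply is_lim_seq_Reals.
Qed.

(** * Dirichlet series *)

Definition lterm (f : nat -> C) (s : C) (k : nat) : C := f k / cpowR (INR k) s.

Definition is_lseries (f : nat -> C) (s l : C) : Prop := is_series (fun k => lterm f s (S k)) l.

Definition ex_lseries_Cmod (f : nat -> C) (s : C) : Prop :=
  ex_series (fun k => Cmod (lterm f s (S k))).

Lemma lterm_dconv (f g : nat -> C) (s : C) k : (1 <= k)%nat ->
  lterm (dconv f g) s k = dconv (lterm f s) (lterm g s) k.
Proof.
  intros Hk. unfold lterm, dconv, Cdiv. rewrite <- csum_mult_r.
  apply csum_ext. intros d Hd. apply divs_spec in Hd as [Hd [q Hq]].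
  assert (1 <= q)%nat by nia.
  replace (k / d)%nat with q by (rewrite Hq, Nat.div_mul; lia).
  rewrite Hq, mult_INR, cpowR_mul_base by (apply lt_0_INR; lia).
  field. split; apply cpowR_neq0.
Qed.

Lemma Cmod_lterm (f : nat -> C) (s : C) k : (1 <= k)%nat ->
  Cmod (lterm f s k) = (Cmod (f k) * Rpower (INR k) (- Re s))%R.
Proof.
  intros Hk. unfold lterm, Cdiv.
  rewrite Cmod_mult, Cmod_inv, Cmod_cpowR, Rpower_Ropp by apply cpowR_neq0. reflexivity.
Qed.

Lemma ex_lseries_Cmod_bounded (f : nat -> C) (s : C) (M : R) : (1 < Re s)%R ->
  (forall k, (1 <= k)%nat -> (Cmod (f k) <= M)%R) -> ex_lseries_Cmod f s.
Proof.
  intros Hs HM.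
  apply (ex_series_le (K := R_AbsRing) (V := R_CompleteNormedModule) _
           (fun k => M * Rpower (INR (S k)) (- Re s))%R).
  - intros k. change (Rabs (Cmod (lterm f s (S k))) <= M * Rpower (INR (S k)) (- Re s))%R.
    rewrite Rabs_pos_eq by apply Cmod_ge_0. rewrite Cmod_lterm by lia.
    apply Rmult_le_compat_r; [apply Rlt_le, exp_pos | apply HM; lia].
  - apply (ex_series_scal_l (K := R_AbsRing) (V := R_NormedModule)). now apply ex_series_Rpower.
Qed.

Lemma ex_lseries_Cmod_is_lseries (f : nat -> C) (s : C) :
  ex_lseries_Cmod f s -> exists l, is_lseries f s l.
Proof.
  intros H.
  apply (ex_series_le (K := C_AbsRing) (V := C_CompleteNormedModule) _ _ (fun _ => Rle_refl _) H).
Qed.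

Lemma is_lseries_ext (f g : nat -> C) (s l : C) : (forall k, (1 <= k)%nat -> f k = g k) ->
  is_lseries f s l -> is_lseries g s l.
Proof.
  intros E. apply is_series_ext. intros k. unfold lterm. rewrite E by lia. reflexivity.
Qed.

Lemma ex_lseries_Cmod_ext (f g : nat -> C) (s : C) : (forall k, (1 <= k)%nat -> f k = g k) ->
  ex_lseries_Cmod f s -> ex_lseries_Cmod g s.
Proof.
  intros E. apply ex_series_ext. intros k. unfold lterm. rewrite E by lia. reflexivity.
Qed.

Lemma is_lseries_dconv (f g : nat -> C) (s F G : C) :
  ex_lseries_Cmod f s -> ex_lseries_Cmod g s -> is_lseries f s F -> is_lseries g s G ->
  is_lseries (dconv f g) s (F * G).
Proof.
  intros Hf Hg HF HG. unfold is_lseries.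
  eapply is_series_ext; [|exact (is_series_dconv _ _ Hf Hg _ _ HF HG)].
  intros k. symmetry. apply lterm_dconv. lia.
Qed.

Lemma ex_lseries_Cmod_dconv (f g : nat -> C) (s : C) :
  ex_lseries_Cmod f s -> ex_lseries_Cmod g s -> ex_lseries_Cmod (dconv f g) s.
Proof.
  intros Hf Hg. unfold ex_lseries_Cmod.
  eapply ex_series_ext; [|exact (ex_series_Cmod_dconv _ _ Hf Hg)].
  intros k. rewrite lterm_dconv by lia. reflexivity.
Qed.

Lemma is_series_eventually0 (a : nat -> C) N : (forall k, (N < k)%nat -> a k = 0) ->
  is_series a (sum_n a N).
Proof.
  intros H0. unfold is_series.
  apply (filterlim_ext_loc (fun _ => sum_n a N)); [|apply filterlim_const].
  exists N. intros n Hn. induction Hn as [|n Hn IH]; [reflexivity|].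
  rewrite sum_Sn, H0, <- IH by lia. symmetry. apply Cplus_0_r.
Qed.

Lemma is_lseries_finite (f : nat -> C) (s : C) N :
  (1 <= N)%nat -> (forall k, (N < k)%nat -> f k = 0) ->
  is_lseries f s (csum (seq 1 N) (lterm f s)).
Proof.
  intros HN H0. replace N with (S (pred N)) by lia. rewrite <- sum_n_csum.
  apply is_series_eventually0. intros k Hk.
  unfold lterm, Cdiv. rewrite H0 by lia. apply Cmult_0_l.
Qed.

Lemma is_series_Re_Im (a : nat -> C) l : is_series a l ->
  is_series (fun k => Re (a k)) (Re l) /\ is_series (fun k => Im (a k)) (Im l).
Proof.
  intros H. destruct l as [x y]. unfold is_series in *.
  assert (Hsum : forall N, sum_n a N = (sum_n (fun k => Re (a k)) N, sum_n (fun k => Im (a k)) N)).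
  { intros N. induction N as [|N IH]; rewrite ?sum_O, ?sum_Sn, ?IH; [|reflexivity].
    now destruct (a 0%nat). }
  split.
  - apply (filterlim_ext (fun N => fst (sum_n a N))); [intros N; now rewrite Hsum|].
    exact (filterlim_comp _ _ _ _ fst _ _ _ H (continuous_fst x y)).
  - apply (filterlim_ext (fun N => snd (sum_n a N))); [intros N; now rewrite Hsum|].
    exact (filterlim_comp _ _ _ _ snd _ _ _ H (continuous_snd x y)).
Qed.

Lemma CSeries_correct (a : nat -> C) l : is_series a l -> CSeries a = l.
Proof.
  intros H. destruct (is_series_Re_Im a l H) as [HRe HIm]. unfold CSeries.
  rewrite (is_series_unique _ _ HRe), (is_series_unique _ _ HIm). now destruct l.
Qed.

Lemma is_lseries_unique (f : nat -> C) (s l1 l2 : C) :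
  is_lseries f s l1 -> is_lseries f s l2 -> l1 = l2.
Proof. intros H1 H2. now rewrite <- (CSeries_correct _ _ H1), <- (CSeries_correct _ _ H2). Qed.

(** * Primes and the Moebius function *)

Section Primes.
Local Open Scope nat_scope.

Definition prime (p : nat) : Prop := 2 <= p /\ forall d, Nat.divide d p -> d = 1 \/ d = p.

Lemma prime_divide_mul p a b : prime p -> Nat.divide p (a * b) -> Nat.divide p a \/ Nat.divide p b.
Proof.
  intros [_ Hp] H. destruct (Hp (Nat.gcd p a) (Nat.gcd_divide_l p a)) as [G|G].
  - right. now apply (Nat.gauss p a b).
  - left. rewrite <- G. apply Nat.gcd_divide_r.
Qed.

Lemma prime_divide_pow p a r : prime p -> Nat.divide p (a ^ r) -> Nat.divide p a.
Proof.
  intros Hp. induction r as [|r IH]; simpl; intros H.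
  - destruct Hp. apply Nat.divide_pos_le in H; lia.
  - apply prime_divide_mul in H as [H|H]; auto.
Qed.

Lemma prime_pow_divide_mul p y z j : prime p -> ~ Nat.divide p y ->
  Nat.divide (p ^ j) (y * z) -> Nat.divide (p ^ j) z.
Proof.
  intros Hp Hy. revert z. induction j as [|j IH]; intros z H; [apply Nat.divide_1_l|].
  assert (Hpz : Nat.divide p z).
  { assert (Hyz : Nat.divide p (y * z))
      by (eapply Nat.divide_trans; [|apply H]; apply Nat.divide_factor_l).
    now apply prime_divide_mul in Hyz as [|]. }
  destruct Hpz as [z' ->]. simpl in *.
  replace (y * (z' * p)) with (p * (y * z')) in H by ring.
  apply Nat.mul_divide_cancel_l in H; [|destruct Hp; lia].
  rewrite Nat.mul_comm. apply Nat.mul_divide_mono_r. auto.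
Qed.

Lemma prime_mul_divide p e k : prime p -> Nat.divide p k -> Nat.divide e k -> ~ Nat.divide p e ->
  Nat.divide (p * e) k.
Proof.
  intros Hp Hpk [x ->] Hpe. destruct (prime_divide_mul p x e Hp Hpk) as [[y ->]|]; [|contradiction].
  exists y. ring.
Qed.

Lemma prime_mul_pow_divide p e r m : prime p -> ~ Nat.divide p e ->
  Nat.divide (p ^ r) m -> Nat.divide (e ^ r) m -> Nat.divide ((p * e) ^ r) m.
Proof.
  intros Hp Hpe Hpm [x ->].
  assert (Hpx : Nat.divide (p ^ r) x).
  { apply (prime_pow_divide_mul p (e ^ r)); auto.
    - intros D. apply Hpe. now apply (prime_divide_pow _ _ r).
    - now rewrite Nat.mul_comm. }
  destruct Hpx as [y ->]. exists y. rewrite Nat.pow_mul_l. ring.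
Qed.

Lemma divide_pow_self d r : 1 <= r -> Nat.divide d (d ^ r).
Proof.
  intros Hr. exists (d ^ (r - 1)).
  replace r with (S (r - 1)) at 1 by lia. rewrite Nat.pow_succ_r'. apply Nat.mul_comm.
Qed.

Lemma le_pow_self d r : 1 <= d -> 1 <= r -> d <= d ^ r.
Proof.
  intros Hd Hr. apply Nat.divide_pos_le; [|now apply divide_pow_self].
  apply Nat.neq_0_lt_0, Nat.pow_nonzero. lia.
Qed.

Lemma prime_divide_prime p q : prime p -> prime q -> Nat.divide q p -> q = p.
Proof. intros [_ Hp] [Hq _] D. destruct (Hp q D); lia. Qed.

Lemma pow_divide_pow e d r : Nat.divide e d -> Nat.divide (e ^ r) (d ^ r).
Proof. intros [x ->]. exists (x ^ r). apply Nat.pow_mul_l. Qed.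

Fixpoint spf_from (fuel d k : nat) : nat :=
  match fuel with
  | 0 => k
  | S f => if dvdb d k then d else spf_from f (S d) k
  end.

Definition spf (k : nat) : nat := spf_from k 2 k.

Lemma spf_from_spec fuel : forall d k, 2 <= d <= k -> k < d + fuel ->
  (forall e, 2 <= e < d -> ~ Nat.divide e k) ->
  2 <= spf_from fuel d k <= k /\ Nat.divide (spf_from fuel d k) k /\
  (forall e, 2 <= e < spf_from fuel d k -> ~ Nat.divide e k).
Proof.
  induction fuel as [|fuel IH]; intros d k Hd Hk Hlow; [lia|]. simpl.
  destruct (dvdbP d k) as [Hdk|Hdk]; [auto|].
  assert (d <> k) by (intros ->; apply Hdk, Nat.divide_refl).
  apply IH; try lia. intros e He. destruct (Nat.eq_dec e d) as [->|]; auto. apply Hlow. lia.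
Qed.

Lemma spf_spec k : 2 <= k ->
  2 <= spf k <= k /\ Nat.divide (spf k) k /\ (forall e, 2 <= e -> Nat.divide e k -> spf k <= e).
Proof.
  intros Hk. destruct (spf_from_spec k 2 k) as [B [D M]]; try lia.
  split; [|split]; auto. intros e He De. destruct (Nat.le_gt_cases (spf k) e); auto.
  exfalso. apply (M e); auto.
Qed.

Lemma spf_prime k : 2 <= k -> prime (spf k).
Proof.
  intros Hk. destruct (spf_spec k Hk) as [B [D M]]. split; [lia|]. intros e De.
  assert (e <> 0) by (intros ->; destruct De as [x Hx]; lia).
  assert (e <= spf k) by (apply Nat.divide_pos_le; auto; lia).
  destruct (Nat.eq_dec e 1) as [|He1]; [auto|]. right. apply Nat.le_antisymm; auto.
  apply M; [lia|]. eapply Nat.divide_trans; eauto.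
Qed.

Lemma spf_of_divisor d k : 2 <= d -> 1 <= k -> Nat.divide d k -> Nat.divide (spf k) d ->
  spf d = spf k.
Proof.
  intros Hd Hk Ddk Dsd.
  assert (2 <= k) by (apply Nat.divide_pos_le in Ddk; lia).
  destruct (spf_spec d Hd) as [B1 [D1 M1]]. destruct (spf_spec k ltac:(lia)) as [B2 [_ M2]].
  apply Nat.le_antisymm.
  - apply M1; auto; lia.
  - apply M2; [lia | eapply Nat.divide_trans; eauto].
Qed.

End Primes.

Lemma dvdb_prime_mul p a b : prime p -> ~ Nat.divide p a -> dvdb p (a * b) = dvdb p b.
Proof.
  intros Hp Ha. destruct (dvdbP p b) as [Hb|Hb]; destruct (dvdbP p (a * b)) as [Hab|Hab]; auto.
  - exfalso. apply Hab, Nat.divide_mul_r, Hb.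
  - exfalso. now destruct (prime_divide_mul p a b Hp Hab).
Qed.

Section Mobius.
Local Open Scope R_scope.

(* The fuel [k] suffices because [k / spf k < k]. *)
Fixpoint mobius_from (fuel k : nat) : R :=
  match fuel with
  | O => 1
  | S f => if Nat.leb k 1 then 1 else
      let p := spf k in if dvdb p (k / p) then 0 else - mobius_from f (k / p)
  end.

Definition mu (k : nat) : R := mobius_from k k.

Lemma mobius_from_fuel f1 f2 k :
  (k <= f1)%nat -> (k <= f2)%nat -> mobius_from f1 k = mobius_from f2 k.
Proof.
  revert f2 k. induction f1 as [|f1 IH]; intros [|f2] k H1 H2; simpl; try reflexivity;
    try (replace (Nat.leb k 1) with true by (symmetry; apply Nat.leb_le; lia); reflexivity).
  destruct (Nat.leb_spec k 1); [reflexivity|].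
  destruct (spf_spec k ltac:(lia)) as [B _].
  assert (k / spf k < k)%nat by (apply Nat.div_lt; lia).
  rewrite (IH f2); auto; lia.
Qed.

Lemma mu_1 : mu 1 = 1.
Proof. reflexivity. Qed.

Lemma mu_unfold k : (2 <= k)%nat ->
  mu k = if dvdb (spf k) (k / spf k) then 0 else - mu (k / spf k).
Proof.
  intros Hk. unfold mu at 1. destruct k as [|k]; [lia|].
  change (mobius_from (S k) (S k)) with (if Nat.leb (S k) 1 then 1 else
    let p := spf (S k) in if dvdb p (S k / p) then 0 else - mobius_from k (S k / p)).
  replace (Nat.leb (S k) 1) with false by (symmetry; apply Nat.leb_gt; lia). cbv zeta.
  destruct (spf_spec (S k) Hk) as [B _].
  assert (S k / spf (S k) < S k)%nat by (apply Nat.div_lt; lia).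
  destruct (dvdb _ _); [reflexivity|].
  unfold mu. now rewrite (mobius_from_fuel k (S k / spf (S k))) by lia.
Qed.

Lemma Rabs_mu_le k : (Rabs (mu k) <= 1)%R.
Proof.
  unfold mu. generalize k at 2. induction k as [|k IH]; intros m; simpl.
  - rewrite Rabs_R1. lra.
  - destruct (Nat.leb m 1); [rewrite Rabs_R1; lra|].
    destruct (dvdb _ _); [rewrite Rabs_R0; lra | now rewrite Rabs_Ropp].
Qed.

Lemma mu_prime_mul p e : prime p -> (1 <= e)%nat -> mu (p * e) = if dvdb p e then 0 else - mu e.
Proof.
  intros Hp. induction e as [e IH] using lt_wf_ind. intros He.
  assert (Hp2 : (2 <= p)%nat) by apply Hp.
  assert (Hk : (2 <= p * e)%nat) by nia.
  rewrite mu_unfold by exact Hk.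
  assert (Hq : prime (spf (p * e))) by now apply spf_prime.
  destruct (spf_spec (p * e) Hk) as [Bq [Dq Mq]].
  remember (spf (p * e)) as q eqn:Eq.
  destruct (Nat.eq_dec q p) as [->|Hqp].
  - now rewrite Nat.mul_comm, Nat.div_mul by lia.
  - assert (Hqp' : ~ Nat.divide q p) by (intros D; apply Hqp; now apply prime_divide_prime).
    assert (Hpq : ~ Nat.divide p q)
      by (intros D; apply Hqp; symmetry; now apply prime_divide_prime).
    destruct (prime_divide_mul q p e Hq Dq) as [|[e' ->]]; [contradiction|].
    assert (He' : (1 <= e' < e' * q)%nat) by nia.
    assert (Hsq : spf (e' * q) = q).
    { rewrite Eq at 2.
      apply spf_of_divisor; [nia | nia | exists p; ring |].
      rewrite <- Eq. apply Nat.divide_factor_r. }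
    rewrite (mu_unfold (e' * q)) by nia. rewrite Hsq, Nat.div_mul by lia.
    replace (p * (e' * q) / q)%nat with (p * e')%nat by (rewrite Nat.mul_assoc, Nat.div_mul; lia).
    rewrite IH by lia. rewrite (dvdb_prime_mul q p e' Hq Hqp'), Nat.mul_comm.
    rewrite (dvdb_prime_mul p q e' Hp Hpq).
    destruct (dvdb q e'), (dvdb p e'); lra.
Qed.

End Mobius.

Section MobiusSum.
Variable K : nat.
Variable Q : nat -> bool.
Hypothesis Q_bound : forall d, Q d = true -> (1 <= d <= K)%nat.
Hypothesis Q_divisor : forall d e, Q d = true -> (1 <= e)%nat -> Nat.divide e d -> Q e = true.
Hypothesis Q_prime_mul : forall p e, prime p -> Q p = true -> Q e = true -> ~ Nat.divide p e ->
  Q (p * e)%nat = true.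

Let T d := if Q d then RtoC (mu d) else 0.

(* Each [d] in [Q] not divisible by [p] cancels against [p * d]; the other terms vanish. *)
Lemma mobius_sum_prime_cancel p e : prime p -> Q p = true -> (1 <= e)%nat ->
  (if Nat.leb e (K / p) then T (p * e)%nat else 0) + (if dvdb p e then 0 else T e) = 0.
Proof.
  intros Hp HQp He. assert (Hp2 : (2 <= p)%nat) by apply Hp. unfold T.
  destruct (dvdbP p e) as [Hpe|Hpe].
  - destruct (Nat.leb e (K / p)), (Q (p * e)%nat); try ring.
    rewrite mu_prime_mul by auto. destruct (dvdbP p e); [ring | contradiction].
  - destruct (Q e) eqn:Qe.
    + assert (Qpe : Q (p * e)%nat = true) by now apply Q_prime_mul.
      replace (Nat.leb e (K / p)) with true.
      * rewrite Qpe, mu_prime_mul by auto. destruct (dvdbP p e); [contradiction|].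
        rewrite RtoC_opp. ring.
      * symmetry. apply Nat.leb_le, Nat.div_le_lower_bound; [lia|]. apply Q_bound in Qpe. lia.
    + replace (Q (p * e)%nat) with false; [destruct (Nat.leb e (K / p)); ring|].
      symmetry. apply not_true_iff_false. intros Qpe.
      rewrite (Q_divisor (p * e) e Qpe He (Nat.divide_factor_r _ _)) in Qe. discriminate.
Qed.

Lemma mobius_sum_prime_vanish p : prime p -> Q p = true -> csum (seq 1 K) T = 0.
Proof.
  intros Hp HQp. assert (Hp2 : (2 <= p)%nat) by apply Hp.
  rewrite (csum_ext _ T (fun d => (if dvdb p d then T d else 0) + (if dvdb p d then 0 else T d)))
    by (intros; destruct (dvdb p _); ring).
  rewrite csum_plus, csum_seq_multiples by lia.
  rewrite <- (csum_seq_truncate K (K / p)) by (apply Nat.Div0.div_le_upper_bound; nia).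
  rewrite <- csum_plus. apply csum_eq0. intros e He. apply in_seq in He.
  apply mobius_sum_prime_cancel; auto; lia.
Qed.

Lemma mobius_sum_admissible : Q 1%nat = true ->
  csum (seq 1 K) T = if existsb (fun d => Nat.leb 2 d && Q d) (seq 1 K) then 0 else 1.
Proof.
  intros HQ1. destruct (existsb _ _) eqn:E.
  - apply existsb_exists in E as [d [_ Hd]]. apply andb_true_iff in Hd as [H2 Hd].
    apply Nat.leb_le in H2. destruct (spf_spec d H2) as [B [D _]].
    apply (mobius_sum_prime_vanish (spf d)); [now apply spf_prime|].
    apply (Q_divisor d); auto; lia.
  - assert (HK : (1 <= K)%nat) by (apply Q_bound in HQ1; lia).
    replace K with (1 + (K - 1))%nat in * by lia. rewrite seq_app, csum_app.
    rewrite (csum_eq0 (seq (1 + 1) _)), Cplus_0_r.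
    + unfold csum, T; simpl. rewrite HQ1, mu_1. ring.
    + intros d Hd. apply in_seq in Hd. unfold T. destruct (Q d) eqn:Qd; auto.
      assert (Hex : existsb (fun d => Nat.leb 2 d && Q d) (seq 1 (1 + (K - 1))) = true).
      { apply existsb_exists. exists d. split; [apply in_seq; lia|].
        rewrite Qd, andb_true_r. apply Nat.leb_le. lia. }
      congruence.
Qed.

End MobiusSum.

Lemma mobius_sum_divisors_pow r m k : (1 <= k)%nat ->
  csum (divs k) (fun d => if dvdb (d ^ r) m then RtoC (mu d) else 0) =
  if existsb (fun d => Nat.leb 2 d && (dvdb d k && dvdb (d ^ r) m)) (seq 1 k) then 0 else 1.
Proof.
  intros Hk. unfold divs. rewrite csum_filter.
  rewrite <- (mobius_sum_admissible k (fun d => dvdb d k && dvdb (d ^ r) m)).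
  - apply csum_ext. intros d _. now destruct (dvdb d k), (dvdb (d ^ r) m).
  - intros d Hd. rewrite andb_true_iff, !dvdb_iff in Hd. destruct Hd as [Hdk _].
    assert (d <> 0)%nat by (intros ->; destruct Hdk; lia).
    apply Nat.divide_pos_le in Hdk; lia.
  - intros d e Hd He Hed. rewrite andb_true_iff, !dvdb_iff in *. destruct Hd as [Hdk Hdm].
    split; eapply Nat.divide_trans; eauto using pow_divide_pow.
  - intros p e Hp Qp Qe Hpe. rewrite andb_true_iff, !dvdb_iff in *.
    destruct Qp, Qe. split; [now apply prime_mul_divide | now apply prime_mul_pow_divide].
  - unfold dvdb. now rewrite Nat.pow_1_l, !Nat.mod_1_r.
Qed.

Lemma mobius_sum_divisors k : (1 <= k)%nat ->
  csum (divs k) (fun d => RtoC (mu d)) = if Nat.eqb k 1 then 1 else 0.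
Proof.
  intros Hk. pose proof (mobius_sum_divisors_pow 1 0 k Hk) as E.
  rewrite (csum_ext _ _ (fun d => RtoC (mu d))) in E
    by (intros; unfold dvdb; now rewrite Nat.Div0.mod_0_l).
  rewrite E. destruct (Nat.eqb_spec k 1) as [->|Hk1]; [reflexivity|].
  replace (existsb _ _) with true; [reflexivity|]. symmetry. apply existsb_exists.
  exists k. split; [apply in_seq; lia|].
  unfold dvdb. rewrite Nat.Div0.mod_same, Nat.Div0.mod_0_l, !andb_true_r.
  apply Nat.leb_le. lia.
Qed.

(** * The r-gcd *)

Lemma list_max_ge x l : In x l -> (x <= list_max l)%nat.
Proof.
  intros H. pose proof (proj1 (list_max_le l (list_max l)) (le_n _)) as F.
  rewrite Forall_forall in F. auto.
Qed.

Lemma gcdr_ge r a b d : (1 <= d <= a)%nat -> Nat.divide (d ^ r) a -> Nat.divide (d ^ r) b ->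
  (d ^ r <= gcdr r a b)%nat.
Proof.
  intros Hd Ha Hb. unfold gcdr.
  eapply Nat.le_trans; [|apply list_max_ge, (in_map _ _ d), in_seq; lia].
  cbv beta. change (Nat.eqb (a mod d ^ r) 0) with (dvdb (d ^ r) a).
  change (Nat.eqb (b mod d ^ r) 0) with (dvdb (d ^ r) b).
  rewrite (proj2 (dvdb_iff _ _) Ha), (proj2 (dvdb_iff _ _) Hb). reflexivity.
Qed.

Lemma gcdr_le1 r a b :
  (forall d, (1 <= d <= a)%nat -> Nat.divide (d ^ r) a -> Nat.divide (d ^ r) b -> d = 1%nat) ->
  (gcdr r a b <= 1)%nat.
Proof.
  intros H. unfold gcdr. apply list_max_le, Forall_forall. intros x Hx.
  apply in_map_iff in Hx as [d [<- Hd]]. apply in_seq in Hd.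
  change (Nat.eqb (a mod d ^ r) 0) with (dvdb (d ^ r) a).
  change (Nat.eqb (b mod d ^ r) 0) with (dvdb (d ^ r) b).
  destruct (dvdbP (d ^ r) a), (dvdbP (d ^ r) b); simpl; try lia.
  rewrite (H d); [rewrite Nat.pow_1_l | lia | |]; auto.
Qed.

Lemma gcdr_pow_eq1 r m k : (1 <= r)%nat -> (1 <= m)%nat -> (1 <= k)%nat ->
  Nat.eqb (gcdr r m (k ^ r)) 1 =
  negb (existsb (fun d => Nat.leb 2 d && (dvdb d k && dvdb (d ^ r) m)) (seq 1 k)).
Proof.
  intros Hr Hm Hk.
  destruct (existsb _ _) eqn:E; simpl; [apply Nat.eqb_neq | apply Nat.eqb_eq].
  - apply existsb_exists in E as [d [_ Hd]].
    rewrite !andb_true_iff, Nat.leb_le, !dvdb_iff in Hd. destruct Hd as [H2 [Dk Dm]].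
    assert (d <= d ^ r)%nat by (apply le_pow_self; lia).
    assert (d ^ r <= m)%nat by (apply Nat.divide_pos_le; [lia | exact Dm]).
    pose proof (gcdr_ge r m (k ^ r) d ltac:(lia) Dm (pow_divide_pow _ _ r Dk)). lia.
  - apply Nat.le_antisymm.
    + apply gcdr_le1. intros d Hd Dm Dk. destruct (Nat.eq_dec d 1) as [|Hd1]; [assumption|exfalso].
      destruct (spf_spec d ltac:(lia)) as [B [D _]].
      assert (Hpk : Nat.divide (spf d) k).
      { apply (prime_divide_pow _ _ r); [apply spf_prime; lia|].
        eapply Nat.divide_trans; [|apply Dk]. eapply Nat.divide_trans; [apply D|].
        now apply divide_pow_self. }
      assert (Hpm : Nat.divide (spf d ^ r) m)
        by (eapply Nat.divide_trans; [apply pow_divide_pow, D | exact Dm]).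
      apply Bool.not_true_iff_false in E. apply E, existsb_exists. exists (spf d).
      split; [apply in_seq; apply Nat.divide_pos_le in Hpk; lia|].
      rewrite !andb_true_iff, Nat.leb_le, !dvdb_iff. split; [lia | auto].
    + pose proof (gcdr_ge r m (k ^ r) 1) as G. rewrite Nat.pow_1_l in G.
      apply G; auto using Nat.divide_1_l.
Qed.

Lemma gcdr_pow_indicator r m k : (1 <= r)%nat -> (1 <= m)%nat -> (1 <= k)%nat ->
  (if Nat.eqb (gcdr r m (k ^ r)) 1 then RtoC 1 else RtoC 0) =
  csum (divs k) (fun d => if dvdb (d ^ r) m then RtoC (mu d) else 0).
Proof.
  intros Hr Hm Hk. rewrite gcdr_pow_eq1, mobius_sum_divisors_pow by auto.
  now destruct (existsb _ _).
Qed.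

(** * Ramanujan sums *)

Lemma csum_geometric_cis th N :
  csum (seq 1 N) (fun j => cis (INR j * th)) * (cis th - 1) = cis (INR (S N) * th) - cis th.
Proof.
  induction N as [|N IH].
  - simpl. rewrite Rmult_1_l. unfold csum; simpl. ring.
  - rewrite seq_S, csum_app, Cmult_plus_distr_r, IH. replace (1 + N)%nat with (S N) by lia.
    replace (INR (S (S N)) * th)%R with (INR (S N) * th + th)%R by (rewrite (S_INR (S N)); ring).
    rewrite cis_add. unfold csum; cbn [fold_right]. ring.
Qed.

Lemma cis_neq1 x : (0 < x < 2 * PI)%R -> cis x <> 1.
Proof.
  intros Hx H. injection H as Hc Hs.
  destruct (sin_eq_O_2PI_0 x ltac:(lra) ltac:(lra) Hs) as [E|[E|E]]; subst x; try lra.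
  rewrite cos_PI in Hc. lra.
Qed.

Lemma csum_seq_one N : csum (seq 1 N) (fun _ => 1) = RtoC (INR N).
Proof.
  induction N as [|N IH]; [reflexivity|].
  rewrite seq_S, csum_app, IH, S_INR, RtoC_plus. unfold csum; simpl. ring.
Qed.

Lemma csum_roots_of_unity N n : (1 <= N)%nat ->
  csum (seq 1 N) (fun j => cis (2 * PI * INR j * INR n / INR N)) =
  if dvdb N n then RtoC (INR N) else 0.
Proof.
  intros HN. assert (HN0 : (0 < INR N)%R) by (apply lt_0_INR; lia).
  set (th := (2 * PI * INR n / INR N)%R).
  rewrite (csum_ext _ _ (fun j => cis (INR j * th))) by (intros; unfold th; f_equal; field; lra).
  pose proof (Nat.div_mod n N ltac:(lia)) as Dn. pose proof (Nat.mod_upper_bound n N ltac:(lia)).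
  assert (Eth : th = (2 * PI * INR (n mod N) / INR N + 2 * INR (n / N) * PI)%R).
  { unfold th. rewrite Dn at 1. rewrite plus_INR, mult_INR. field. lra. }
  unfold dvdb. destruct (Nat.eqb_spec (n mod N) 0) as [E0|E0].
  - rewrite <- csum_seq_one. apply csum_ext. intros j _. rewrite Eth, E0.
    replace (INR j * (2 * PI * INR 0 / INR N + 2 * INR (n / N) * PI))%R
      with (0 + 2 * INR (j * (n / N)) * PI)%R by (rewrite mult_INR; simpl; field; lra).
    now rewrite cis_period, cis_0.
  - assert (Hw : cis th - 1 <> 0).
    { intros E. apply (cis_neq1 (2 * PI * INR (n mod N) / INR N)).
      - assert (0 < INR (n mod N))%R by (apply lt_0_INR; lia).
        assert (INR (n mod N) < INR N)%R by (apply lt_INR; lia). pose proof PI_RGT_0.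
        split; [apply Rdiv_lt_0_compat; nra|].
        apply (Rmult_lt_reg_r (INR N)); auto.
        unfold Rdiv. rewrite Rmult_assoc, Rinv_l, Rmult_1_r; nra.
      - rewrite <- cis_period with (k := (n / N)%nat), <- Eth.
        replace (cis th) with (cis th - 1 + 1) by ring. rewrite E. ring. }
    pose proof (csum_geometric_cis th N) as G.
    replace (INR (S N) * th)%R with (th + 2 * INR n * PI)%R in G
      by (unfold th; rewrite S_INR; field; lra).
    rewrite cis_period in G. replace (cis th - cis th) with (RtoC 0) in G by ring.
    rewrite <- (Cmult_1_r (csum _ _)), <- (Cinv_r (cis th - 1)), Cmult_assoc, G by exact Hw. ring.
Qed.

Definition rpow_indicator (r n q : nat) : C :=
  if dvdb (q ^ r) n then RtoC (INR (q ^ r)) else 0.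

Lemma csum_cis_pow_multiples r n d q : (1 <= d)%nat -> (1 <= q)%nat ->
  csum (seq 1 ((d * q) ^ r))
    (fun m => if dvdb (d ^ r) m then cis (2 * PI * INR m * INR n / INR ((d * q) ^ r)) else 0) =
  rpow_indicator r n q.
Proof.
  intros Hd Hq.
  assert (Hdr : (1 <= d ^ r)%nat) by (apply Nat.neq_0_lt_0, Nat.pow_nonzero; lia).
  assert (Hqr : (1 <= q ^ r)%nat) by (apply Nat.neq_0_lt_0, Nat.pow_nonzero; lia).
  rewrite csum_seq_multiples by exact Hdr.
  rewrite Nat.pow_mul_l, (Nat.mul_comm (d ^ r)), Nat.div_mul by lia.
  unfold rpow_indicator. rewrite <- csum_roots_of_unity by exact Hqr.
  apply csum_ext. intros j _. f_equal. rewrite !mult_INR.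
  assert (0 < INR (d ^ r))%R by (apply lt_0_INR; lia).
  assert (0 < INR (q ^ r))%R by (apply lt_0_INR; lia).
  field. lra.
Qed.

Lemma ramr_mobius r n k : (1 <= r)%nat -> (1 <= k)%nat ->
  ramr r n k = dconv (fun d => RtoC (mu d)) (rpow_indicator r n) k.
Proof.
  intros Hr Hk. unfold ramr. rewrite csum_filter.
  set (e m := cis (2 * PI * INR m * INR n / INR (k ^ r))).
  rewrite (csum_ext _ _ (fun m =>
    csum (divs k) (fun d => RtoC (mu d) * (if dvdb (d ^ r) m then e m else 0)))).
  - rewrite csum_swap. apply csum_ext. intros d Hd. apply divs_spec in Hd as [Hd [q Hq]].
    rewrite csum_mult_l. f_equal.
    replace (k / d)%nat with q by (rewrite Hq, Nat.div_mul; lia). unfold e.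
    rewrite Hq, Nat.mul_comm. apply csum_cis_pow_multiples; nia.
  - intros m Hm. apply in_seq in Hm. cbv beta.
    transitivity ((if Nat.eqb (gcdr r m (k ^ r)) 1 then RtoC 1 else RtoC 0) * e m).
    { unfold e. destruct (Nat.eqb _ 1); ring. }
    rewrite gcdr_pow_indicator, <- csum_mult_r by lia. apply csum_ext. intros d _.
    destruct (dvdb (d ^ r) m); ring.
Qed.

(** * The Dirichlet series of t^k, mu, h and c_r(n, .) *)

Lemma Cmod_pow_n_le t d : (Cmod t <= 1)%R -> (Cmod (pow_n t d) <= 1)%R.
Proof.
  intros Ht. induction d as [|d IH]; simpl.
  - change (Cmod 1 <= 1)%R. rewrite Cmod_1. lra.
  - change (Cmod (t * pow_n t d) <= 1)%R. rewrite Cmod_mult.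
    pose proof (Cmod_ge_0 t). pose proof (Cmod_ge_0 (pow_n t d)). nra.
Qed.

Lemma is_lseries_polylog s t : (1 < Re s)%R -> (Cmod t <= 1)%R ->
  ex_lseries_Cmod (pow_n t) s /\ is_lseries (pow_n t) s (Li s t).
Proof.
  intros Hs Ht.
  assert (Hex : ex_lseries_Cmod (pow_n t) s)
    by (apply (ex_lseries_Cmod_bounded _ _ 1); auto using Cmod_pow_n_le).
  split; [exact Hex|]. destruct (ex_lseries_Cmod_is_lseries _ _ Hex) as [l Hl].
  unfold Li. change (is_lseries (pow_n t) s (CSeries (fun k => lterm (pow_n t) s (S k)))).
  now rewrite (CSeries_correct _ _ Hl).
Qed.

Lemma is_lseries_zeta s : (1 < Re s)%R ->
  ex_lseries_Cmod (fun _ => 1) s /\ is_lseries (fun _ => 1) s (zeta s).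
Proof.
  intros Hs.
  assert (Hex : ex_lseries_Cmod (fun _ => 1) s)
    by (apply (ex_lseries_Cmod_bounded _ _ 1); auto; intros; rewrite Cmod_1; lra).
  split; [exact Hex|]. destruct (ex_lseries_Cmod_is_lseries _ _ Hex) as [l Hl].
  assert (Hz : is_series (fun k => / cpowR (INR (S k)) s) l).
  { apply (is_series_ext (fun k => lterm (fun _ => 1) s (S k))); [|exact Hl].
    intros k. unfold lterm, Cdiv. apply Cmult_1_l. }
  unfold zeta. now rewrite (CSeries_correct _ _ Hz).
Qed.

Lemma ex_lseries_Cmod_mu s : (1 < Re s)%R -> ex_lseries_Cmod (fun d => RtoC (mu d)) s.
Proof.
  intros Hs. apply (ex_lseries_Cmod_bounded _ _ 1); auto.
  intros. rewrite Cmod_R. apply Rabs_mu_le.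
Qed.

Lemma is_lseries_mu_mul_zeta s M : (1 < Re s)%R -> is_lseries (fun d => RtoC (mu d)) s M ->
  M * zeta s = 1.
Proof.
  intros Hs HM. destruct (is_lseries_zeta s Hs) as [exZ HZ].
  pose proof (is_lseries_dconv _ _ s _ _ (ex_lseries_Cmod_mu s Hs) exZ HM HZ) as Hprod.
  set (delta := dconv (fun d => RtoC (mu d)) (fun _ => 1)) in Hprod.
  assert (Hdelta : forall k, (1 <= k)%nat -> delta k = if Nat.eqb k 1 then 1 else 0).
  { intros k Hk. unfold delta. rewrite <- mobius_sum_divisors by exact Hk.
    apply csum_ext. intros. ring. }
  assert (Hfin : is_lseries delta s (csum (seq 1 1) (lterm delta s))).
  { apply (is_lseries_finite delta s 1 (le_n 1)). intros k Hk. rewrite Hdelta by lia.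
    now replace (Nat.eqb k 1) with false by (symmetry; apply Nat.eqb_neq; lia). }
  assert (E1 : csum (seq 1 1) (lterm delta s) = 1).
  { unfold csum, lterm. cbn [seq fold_right]. rewrite Hdelta by lia. cbn [Nat.eqb].
    change (INR 1) with 1%R. rewrite cpowR_1_base. field. }
  rewrite E1 in Hfin. exact (is_lseries_unique _ _ _ _ Hprod Hfin).
Qed.

Lemma lterm_rpow_indicator r n p q : (1 <= q)%nat ->
  lterm (rpow_indicator r n) (RtoC (INR r) * p + RtoC (INR r)) q =
  if dvdb (q ^ r) n then cpowR (INR q) (RtoC (INR r) * - p) else 0.
Proof.
  intros Hq. assert (Hq0 : (0 < INR q)%R) by (apply lt_0_INR; lia).
  unfold lterm, rpow_indicator. destruct (dvdb (q ^ r) n); [|unfold Cdiv; ring].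
  rewrite cpowR_add, cpowR_INR, pow_INR by exact Hq0.
  replace (RtoC (INR r) * - p) with (- (RtoC (INR r) * p)) by ring. rewrite cpowR_opp.
  assert (Hqr : RtoC (INR q ^ r) <> 0)
    by (intros E; injection E as E; now apply (pow_nonzero (INR q) r); [lra|]).
  field. split; auto using cpowR_neq0.
Qed.

Lemma is_lseries_rpow_indicator r n p : (1 <= r)%nat -> (1 <= n)%nat ->
  is_lseries (rpow_indicator r n) (RtoC (INR r) * p + RtoC (INR r)) (sigmar (- p) n r).
Proof.
  intros Hr Hn. replace (sigmar (- p) n r) with
    (csum (seq 1 n) (lterm (rpow_indicator r n) (RtoC (INR r) * p + RtoC (INR r)))).
  - apply is_lseries_finite; [exact Hn|]. intros q Hq. unfold rpow_indicator.
    destruct (dvdbP (q ^ r) n) as [D|]; [exfalso|reflexivity].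
    apply Nat.divide_pos_le in D; [|lia].
    assert (q <= q ^ r)%nat by (apply le_pow_self; lia).
    lia.
  - unfold sigmar. rewrite csum_filter. apply csum_ext. intros q Hq. apply in_seq in Hq.
    now rewrite lterm_rpow_indicator by lia.
Qed.

Lemma ex_lseries_Cmod_rpow_indicator r n s : (1 <= n)%nat -> (1 < Re s)%R ->
  ex_lseries_Cmod (rpow_indicator r n) s.
Proof.
  intros Hn Hs. apply (ex_lseries_Cmod_bounded _ _ (INR n)); auto. intros q Hq.
  unfold rpow_indicator. destruct (dvdbP (q ^ r) n) as [D|].
  - rewrite Cmod_R, Rabs_pos_eq by apply pos_INR. apply le_INR, Nat.divide_pos_le; auto; lia.
  - rewrite Cmod_0. apply pos_INR.
Qed.

Lemma lterm_Mr r t n p k : (1 <= k)%nat ->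
  lterm (Mr r t n) (RtoC (INR r) * p) k =
  lterm (dconv (pow_n t) (ramr r n)) (RtoC (INR r) * p + RtoC (INR r)) k.
Proof.
  intros Hk. assert (Hk0 : (0 < INR k)%R) by (apply lt_0_INR; lia).
  unfold lterm, Mr, dconv. change (filter _ (seq 1 k)) with (divs k).
  rewrite (csum_ext (divs k) _ (fun d => pow_n t d * ramr r n (k / d)%nat)) by (intros; ring).
  rewrite cpowR_add, cpowR_INR, pow_INR by exact Hk0.
  assert (Hkr : RtoC (INR k ^ r) <> 0)
    by (intros E; injection E as E; now apply (pow_nonzero (INR k) r); [lra|]).
  field. split; auto using cpowR_neq0.
Qed.

Lemma is_lseries_ramr r n p M : (1 <= r)%nat -> (1 <= n)%nat ->
  (1 < Re (RtoC (INR r) * p + RtoC (INR r)))%R ->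
  is_lseries (fun d => RtoC (mu d)) (RtoC (INR r) * p + RtoC (INR r)) M ->
  ex_lseries_Cmod (ramr r n) (RtoC (INR r) * p + RtoC (INR r)) /\
  is_lseries (ramr r n) (RtoC (INR r) * p + RtoC (INR r)) (M * sigmar (- p) n r).
Proof.
  intros Hr Hn Hs HM.
  assert (Hext : forall k, (1 <= k)%nat ->
                   dconv (fun d => RtoC (mu d)) (rpow_indicator r n) k = ramr r n k)
    by (intros; symmetry; now apply ramr_mobius).
  pose proof (ex_lseries_Cmod_mu _ Hs) as exM.
  pose proof (ex_lseries_Cmod_rpow_indicator r n _ Hn Hs) as exH.
  split.
  - exact (ex_lseries_Cmod_ext _ _ _ Hext (ex_lseries_Cmod_dconv _ _ _ exM exH)).
  - exact (is_lseries_ext _ _ _ _ Hext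
             (is_lseries_dconv _ _ _ _ _ exM exH HM (is_lseries_rpow_indicator r n p Hr Hn))).
Qed.

Theorem proposition4 (r n : nat) (p t : C)
  (hr : (0 < r)%nat) (hn : (0 < n)%nat)
  (hp : (1 < Re (RtoC (INR r) * (p + 1)))%R)
  (ht : (Cmod t <= 1)%R) :
  is_series (fun k : nat => Mr r t n (S k) / cpowR (INR (S k)) (RtoC (INR r) * p))
    (Li (RtoC (INR r) * p + RtoC (INR r)) t / zeta (RtoC (INR r) * p + RtoC (INR r))
     * sigmar (- p) n r).
Proof.
  set (s := RtoC (INR r) * p + RtoC (INR r)).
  assert (Hs : (1 < Re s)%R).
  { unfold s. replace (RtoC (INR r) * p + RtoC (INR r)) with (RtoC (INR r) * (p + 1)) by ring.
    exact hp. }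
  destruct (is_lseries_polylog s t Hs ht) as [exL HL].
  destruct (ex_lseries_Cmod_is_lseries _ s (ex_lseries_Cmod_mu s Hs)) as [M HM].
  destruct (is_lseries_ramr r n p M hr hn Hs HM) as [exR HR].
  pose proof (is_lseries_mu_mul_zeta s M Hs HM) as HMZ.
  assert (Hz : zeta s <> 0) by (intros E; rewrite E, Cmult_0_r in HMZ; injection HMZ; lra).
  replace (Li s t / zeta s * sigmar (- p) n r) with (Li s t * (M * sigmar (- p) n r)).
  - eapply is_series_ext; [|exact (is_lseries_dconv _ _ _ _ _ exL exR HL HR)].
    intros k. symmetry. apply lterm_Mr. lia.
  - replace M with (/ zeta s) by (rewrite <- (Cmult_1_l (/ zeta s)), <- HMZ; field; exact Hz).
    field. exact Hz.
Qed.
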